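(* Fix $\lambda,\mu,q>0$, $k\ge1$, $b\ge0$ and $\alpha\in(\underline\alpha,1]$, and let $J(\alpha,a,b)$, $\gamma$, $\theta$, $m_\alpha$ be as in the context. Then for $a\in(0,\infty)$, $\frac{\partial}{\partial a}J(\alpha,a,b)=\lambda\frac{\mu}{\alpha}e^{-\frac{\mu}{\alpha}a}\,\frac{-ak\big(q+q\frac{\mu}{\alpha}\theta(b,\alpha)\big)+c(\alpha)\gamma(b,\alpha)+\lambda k\frac{e^{-\frac{\mu}{\alpha}a}-1}{\mu/\alpha}}{\big(q+\frac{\mu q}{\alpha}\theta(b,\alpha)+\lambda e^{-\frac{\mu}{\alpha}a}\big)^2}.$ Consequently: (1) $\lim_{a\to0+}\frac{\partial}{\partial a}J(\alpha,a,b)>0$ and $\frac{\partial}{\partial a}J(\alpha,a,b)<0$ for all sufficiently large $a$, so neither $a=0$ nor $a=\infty$ maximises $a\mapsto J(\alpha,a,b)$; (2) there exists a unique $a_{k,b,\alpha}\in(0,\infty)$ with $\frac{\partial}{\partial a}J(\alpha,a_{k,b,\alpha},b)=0$, equivalently $-a_{k,b,\alpha}k\big(q+q\frac{\mu}{\alpha}\theta(b,\alpha)\big)+c(\alpha)\gamma(b,\alpha)+\lambda k\frac{e^{-\frac{\mu}{\alpha}a_{k,b,\alpha}}-1}{\mu/\alpha}=0,$ and at this point $J(\alpha,a_{k,b,\alpha},b)=k\,a_{k,b,\alpha}$.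
   Context: Let $c(\alpha)=c-(1-\alpha)(1+\eta_2)\lambda\mu$ with $c>0$, $\eta_2>0$, where $\underline\alpha$ is the zero of $c(\cdot)$, so that $c(\alpha)>0$ for $\alpha>\underline\alpha$. For retention $\alpha$, let $\rho_-(\alpha)\le0\le\Phi_q(\alpha)$ be the roots of $\alpha c(\alpha)\theta^2+(c(\alpha)\mu-\alpha\lambda-\alpha q)\theta-\mu q=0$. Define $\gamma(x,\alpha)=\frac{\Phi_q(\alpha)-\rho_-(\alpha)}{\Phi_q(\alpha)e^{\Phi_q(\alpha)x}-\rho_-(\alpha)e^{\rho_-(\alpha)x}}$, $\theta(x,\alpha)=\frac{e^{\Phi_q(\alpha)x}-e^{\rho_-(\alpha)x}}{\Phi_q(\alpha)e^{\Phi_q(\alpha)x}-\rho_-(\alpha)e^{\rho_-(\alpha)x}}$, $m_\alpha(a)=\frac{1-e^{-\frac{\mu}{\alpha}a}(\frac{\mu}{\alpha}a+1)}{\mu/\alpha}$, and $J(\alpha,a,b)=\frac{c(\alpha)\gamma(b,\alpha)-\lambda k\,m_\alpha(a)}{q+\frac{\mu q}{\alpha}\theta(b,\alpha)+\lambda e^{-\frac{\mu}{\alpha}a}}$ (the value at initial reserve $0$ of the policy with retention $\alpha$, injections up to severity $a$ and dividend barrier $b$, for exponential claims with rate $\mu$). *)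

From Stdlib Require Import Reals Lra.
From Coquelicot Require Import Coquelicot.
Open Scope R_scope.

Definition calpha (c eta2 lam mu al : R) : R := c - (1 - al) * (1 + eta2) * lam * mu.

(* coefficients of  al c(al) th^2 + (c(al) mu - al lam - al q) th - mu q = 0 *)
Definition qA (c eta2 lam mu al : R) : R := al * calpha c eta2 lam mu al.
Definition qB (c eta2 lam mu q al : R) : R :=
  calpha c eta2 lam mu al * mu - al * lam - al * q.
Definition qC (mu q : R) : R := - (mu * q).
Definition qdisc (c eta2 lam mu q al : R) : R :=
  qB c eta2 lam mu q al ^ 2 - 4 * qA c eta2 lam mu al * qC mu q.

Definition Phiq (c eta2 lam mu q al : R) : R :=
  (- qB c eta2 lam mu q al + sqrt (qdisc c eta2 lam mu q al)) / (2 * qA c eta2 lam mu al).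
Definition rhom (c eta2 lam mu q al : R) : R :=
  (- qB c eta2 lam mu q al - sqrt (qdisc c eta2 lam mu q al)) / (2 * qA c eta2 lam mu al).

Definition gam (c eta2 lam mu q x al : R) : R :=
  let P := Phiq c eta2 lam mu q al in
  let r := rhom c eta2 lam mu q al in
  (P - r) / (P * exp (P * x) - r * exp (r * x)).

Definition thet (c eta2 lam mu q x al : R) : R :=
  let P := Phiq c eta2 lam mu q al in
  let r := rhom c eta2 lam mu q al in
  (exp (P * x) - exp (r * x)) / (P * exp (P * x) - r * exp (r * x)).

Definition malpha (mu al a : R) : R :=
  (1 - exp (- (mu / al) * a) * ((mu / al) * a + 1)) / (mu / al).

Definition J (c eta2 lam mu q k al a b : R) : R :=
  (calpha c eta2 lam mu al * gam c eta2 lam mu q b al - lam * k * malpha mu al a)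
  / (q + (mu * q / al) * thet c eta2 lam mu q b al + lam * exp (- (mu / al) * a)).

(* With m = mu/alpha, Q = q (1 + m theta(b)) and N0 = c(alpha) gamma(b), the
   value J(a) is (N0 - lambda k m_alpha(a)) / (Q + lambda e^{-m a}), and N0 > 0
   because Phi_q > 0 > rho_-.  Its derivative is a positive weight times
   num(a) = -a k Q + N0 + lambda k (e^{-m a} - 1)/m, which is strictly
   decreasing, equal to N0 at 0 and negative past N0/(kQ); so num has exactly
   one positive root, found by the intermediate value theorem.  At that root
   N0 - lambda k m_alpha(a) = k a (Q + lambda e^{-m a}), i.e. J(a) = k a. *)
From Stdlib Require Import Reals Lra.
From Coquelicot Require Import Coquelicot.
Open Scope R_scope.

Lemma quad_root_plus_gt0 (A B C : R) : 0 < A -> C < 0 ->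
  0 < (- B + sqrt (B ^ 2 - 4 * A * C)) / (2 * A).
Proof.
  intros HA HC.
  assert (Hsq : sqrt (B ^ 2 - 4 * A * C) * sqrt (B ^ 2 - 4 * A * C)
                = B ^ 2 - 4 * A * C) by (apply sqrt_sqrt; nra).
  pose proof (sqrt_pos (B ^ 2 - 4 * A * C)).
  apply Rdiv_lt_0_compat; nra.
Qed.

Lemma quad_root_minus_lt0 (A B C : R) : 0 < A -> C < 0 ->
  (- B - sqrt (B ^ 2 - 4 * A * C)) / (2 * A) < 0.
Proof.
  intros HA HC.
  assert (Hsq : sqrt (B ^ 2 - 4 * A * C) * sqrt (B ^ 2 - 4 * A * C)
                = B ^ 2 - 4 * A * C) by (apply sqrt_sqrt; nra).
  pose proof (sqrt_pos (B ^ 2 - 4 * A * C)).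
  unfold Rdiv; apply Rmult_neg_pos; [nra | apply Rinv_0_lt_compat; lra].
Qed.

Lemma exp_le_compat (x y : R) : x <= y -> exp x <= exp y.
Proof. intros [Hlt | ->]; [left; apply exp_increasing |]; lra. Qed.

Section Roots.

Variables (c eta2 lam mu q al : R).
Hypotheses (Hmu : 0 < mu) (Hq : 0 < q) (Hal : 0 < al)
  (Hcal : 0 < calpha c eta2 lam mu al).

Let qA_gt0 : 0 < qA c eta2 lam mu al.
Proof. unfold qA; apply Rmult_lt_0_compat; lra. Qed.

Let qC_lt0 : qC mu q < 0.
Proof. unfold qC; nra. Qed.

Lemma Phiq_gt0 : 0 < Phiq c eta2 lam mu q al.
Proof. exact (quad_root_plus_gt0 _ _ _ qA_gt0 qC_lt0). Qed.

Lemma rhom_lt0 : rhom c eta2 lam mu q al < 0.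
Proof. exact (quad_root_minus_lt0 _ _ _ qA_gt0 qC_lt0). Qed.

Let denom_gt0 (x : R) :
  let P := Phiq c eta2 lam mu q al in
  let r := rhom c eta2 lam mu q al in
  0 < P * exp (P * x) - r * exp (r * x).
Proof.
  pose proof Phiq_gt0; pose proof rhom_lt0.
  pose proof (exp_pos (Phiq c eta2 lam mu q al * x)).
  pose proof (exp_pos (rhom c eta2 lam mu q al * x)).
  simpl; nra.
Qed.

Lemma gam_gt0 (x : R) : 0 < gam c eta2 lam mu q x al.
Proof.
  pose proof Phiq_gt0; pose proof rhom_lt0.
  apply Rdiv_lt_0_compat; [lra | apply denom_gt0].
Qed.

Lemma thet_ge0 (x : R) : 0 <= x -> 0 <= thet c eta2 lam mu q x al.
Proof.
  intros Hx; pose proof Phiq_gt0; pose proof rhom_lt0.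
  apply Rdiv_le_0_compat; [| apply denom_gt0].
  assert (exp (rhom c eta2 lam mu q al * x) <= exp (Phiq c eta2 lam mu q al * x))
    by (apply exp_le_compat; nra).
  lra.
Qed.

End Roots.

Section Value_function.

Variables (N0 m Q lam k : R).
Hypotheses (HN0 : 0 < N0) (Hm : 0 < m) (HQ : 0 < Q) (Hlam : 0 < lam) (Hk : 0 < k).

Definition Jmodel (a : R) : R :=
  (N0 - lam * k * ((1 - exp (- m * a) * (m * a + 1)) / m)) / (Q + lam * exp (- m * a)).

Definition crit_num (a : R) : R :=
  - a * k * Q + N0 + lam * k * (exp (- m * a) - 1) / m.

Definition dJmodel (a : R) : R :=
  lam * m * exp (- m * a) * crit_num a / (Q + lam * exp (- m * a)) ^ 2.

Let denom_gt0 (a : R) : 0 < Q + lam * exp (- m * a).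
Proof. pose proof (exp_pos (- m * a)); nra. Qed.

Lemma is_derive_Jmodel (a : R) : is_derive Jmodel a (dJmodel a).
Proof.
  pose proof (denom_gt0 a).
  unfold Jmodel, dJmodel, crit_num; auto_derive.
  - lra.
  - field; lra.
Qed.

Lemma continuous_dJmodel (a : R) : continuous dJmodel a.
Proof.
  apply (@ex_derive_continuous R_AbsRing R_NormedModule).
  pose proof (denom_gt0 a).
  unfold dJmodel, crit_num; auto_derive; repeat split; try lra.
  rewrite Rmult_1_r; apply Rgt_not_eq, Rmult_lt_0_compat; assumption.
Qed.

Let dJmodel_weight (a : R) :
  dJmodel a = lam * m * exp (- m * a) / (Q + lam * exp (- m * a)) ^ 2 * crit_num a.
Proof. unfold dJmodel, Rdiv; ring. Qed.

Let weight_gt0 (a : R) : 0 < lam * m * exp (- m * a) / (Q + lam * exp (- m * a)) ^ 2.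
Proof.
  apply Rdiv_lt_0_compat; [| apply pow_lt, denom_gt0].
  repeat apply Rmult_lt_0_compat; try apply exp_pos; assumption.
Qed.

Lemma dJmodel_eq0 (a : R) : dJmodel a = 0 <-> crit_num a = 0.
Proof.
  rewrite dJmodel_weight; pose proof (weight_gt0 a); split.
  - intros H0; destruct (Rmult_integral _ _ H0); [lra | assumption].
  - intros ->; ring.
Qed.

Lemma dJmodel_gt0 (a : R) : 0 < crit_num a -> 0 < dJmodel a.
Proof. rewrite dJmodel_weight; pose proof (weight_gt0 a); nra. Qed.

Lemma dJmodel_lt0 (a : R) : crit_num a < 0 -> dJmodel a < 0.
Proof. rewrite dJmodel_weight; pose proof (weight_gt0 a); nra. Qed.

Lemma crit_num0 : crit_num 0 = N0.
Proof. unfold crit_num; rewrite Rmult_0_r, exp_0; field; lra. Qed.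

Lemma crit_num_decreasing (a1 a2 : R) : a1 < a2 -> crit_num a2 < crit_num a1.
Proof.
  intros H12; unfold crit_num.
  assert (Hexp : exp (- m * a2) < exp (- m * a1)) by (apply exp_increasing; nra).
  assert (Hcorr : lam * k * (exp (- m * a2) - 1) / m <= lam * k * (exp (- m * a1) - 1) / m).
  { unfold Rdiv; apply Rmult_le_compat_r; [left; apply Rinv_0_lt_compat; assumption |].
    apply Rmult_le_compat_l; [left; apply Rmult_lt_0_compat; assumption | lra]. }
  assert (0 < (a2 - a1) * (k * Q)) by (apply Rmult_lt_0_compat; nra).
  nra.
Qed.

Lemma crit_num_inj (a1 a2 : R) : crit_num a1 = crit_num a2 -> a1 = a2.
Proof.
  intros Heq.
  destruct (Rtotal_order a1 a2) as [Hlt | [-> | Hlt]]; [| reflexivity |];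
    pose proof (crit_num_decreasing _ _ Hlt); lra.
Qed.

Lemma crit_num_lt0 (a : R) : N0 / (k * Q) < a -> crit_num a < 0.
Proof.
  intros Ha.
  assert (Ha0 : 0 < a).
  { apply Rlt_trans with (N0 / (k * Q)); [apply Rdiv_lt_0_compat; nra | assumption]. }
  apply Rlt_div_l in Ha; [| nra].
  assert (Hexp : exp (- m * a) <= 1) by (rewrite <- exp_0; apply exp_le_compat; nra).
  assert (Hcorr : lam * k * (exp (- m * a) - 1) / m <= 0).
  { unfold Rdiv; apply Rmult_le_0_r; [| left; apply Rinv_0_lt_compat; lra].
    apply Rmult_le_0_l; [left; apply Rmult_lt_0_compat |]; lra. }
  unfold crit_num; nra.
Qed.

Lemma crit_num_root : exists2 a, 0 < a & crit_num a = 0.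
Proof.
  set (A := N0 / (k * Q) + 1).
  assert (HA : 0 < A) by (assert (0 < N0 / (k * Q)) by (apply Rdiv_lt_0_compat; nra);
                          unfold A; lra).
  assert (Hcont : continuity (fun a => - crit_num a)).
  { intros x; apply continuity_pt_filterlim.
    apply (@ex_derive_continuous R_AbsRing R_NormedModule (fun a => - crit_num a)).
    unfold crit_num; auto_derive; lra. }
  assert (HnumA : crit_num A < 0) by (apply crit_num_lt0; unfold A; lra).
  destruct (IVT _ 0 A Hcont HA) as [z [[Hz0 HzA] Hz]]; rewrite ?crit_num0; try lra.
  exists z; [| lra].
  destruct Hz0 as [| <-]; [assumption |].
  rewrite crit_num0 in Hz; lra.
Qed.

Lemma Jmodel_crit (a : R) : crit_num a = 0 -> Jmodel a = k * a.
Proof.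
  unfold crit_num, Jmodel; intros Hnum.
  pose proof (denom_gt0 a).
  replace N0 with (a * k * Q - lam * k * (exp (- m * a) - 1) / m) by lra.
  field; lra.
Qed.

End Value_function.

Lemma J_Jmodel (c eta2 lam mu q k al b a : R) : al <> 0 ->
  J c eta2 lam mu q k al a b
  = Jmodel (calpha c eta2 lam mu al * gam c eta2 lam mu q b al) (mu / al)
      (q + q * (mu / al) * thet c eta2 lam mu q b al) lam k a.
Proof.
  intros Hal; unfold J, Jmodel, malpha.
  replace (mu * q / al) with (q * (mu / al)) by (field; assumption).
  reflexivity.
Qed.

Theorem lemma4p3 (c eta2 lam mu q k b al : R)
  (Hc : 0 < c) (Heta2 : 0 < eta2) (Hlam : 0 < lam) (Hmu : 0 < mu) (Hq : 0 < q)
  (Hk : 1 <= k) (Hb : 0 <= b)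
  (Hal0 : 0 < al) (Hal1 : al <= 1) (Hcal : 0 < calpha c eta2 lam mu al) :
  let cA := calpha c eta2 lam mu al in
  let gb := gam c eta2 lam mu q b al in
  let tb := thet c eta2 lam mu q b al in
  let Ja := fun a => J c eta2 lam mu q k al a b in
  let num := fun a =>
    - a * k * (q + q * (mu / al) * tb) + cA * gb
    + lam * k * (exp (- (mu / al) * a) - 1) / (mu / al) in
  (* derivative formula *)
  (forall a, 0 < a ->
     is_derive Ja a
       (lam * (mu / al) * exp (- (mu / al) * a) * num a
        / (q + (mu * q / al) * tb + lam * exp (- (mu / al) * a)) ^ 2)) /\
  (* (1) positive right limit at 0, negative for large a *)
  (exists L, 0 < L /\ filterlim (fun a => Derive Ja a) (at_right 0) (locally L)) /\
  (exists A, forall a, A < a -> Derive Ja a < 0) /\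
  (* (2) unique critical point, characterized by num = 0, where J = k a *)
  (forall a, 0 < a -> (Derive Ja a = 0 <-> num a = 0)) /\
  (exists astar, 0 < astar /\ Derive Ja astar = 0 /\ num astar = 0 /\
     (forall a, 0 < a -> Derive Ja a = 0 -> a = astar) /\
     Ja astar = k * astar).
Proof.
  intros cA gb tb Ja num.
  set (m := mu / al); set (Q := q + q * m * tb); set (N0 := cA * gb).
  assert (Hm : 0 < m) by (apply Rdiv_lt_0_compat; assumption).
  assert (HN0 : 0 < N0) by (apply Rmult_lt_0_compat; [| apply gam_gt0]; assumption).
  assert (HQ : 0 < Q).
  { assert (0 <= tb) by (apply thet_ge0; assumption).
    assert (0 <= q * m * tb) by (apply Rmult_le_pos; [apply Rmult_le_pos |]; lra).
    unfold Q; lra. }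
  assert (Hk0 : 0 < k) by lra.
  assert (HJa : forall a, is_derive Ja a (dJmodel N0 m Q lam k a)).
  { intros a; apply is_derive_ext with (Jmodel N0 m Q lam k).
    - intros t; symmetry; apply J_Jmodel; lra.
    - apply is_derive_Jmodel; assumption. }
  assert (HDJa : forall a, Derive Ja a = dJmodel N0 m Q lam k a)
    by (intros a; apply is_derive_unique, HJa).
  destruct (crit_num_root N0 m Q lam k HN0 Hm HQ Hlam Hk0) as [astar Hastar Hroot].
  assert (Hcrit : forall a, Derive Ja a = 0 <-> crit_num N0 m Q lam k a = 0)
    by (intros a; rewrite HDJa; apply dJmodel_eq0; assumption).
  split; [| split; [| split; [| split]]].
  - intros a _; replace (mu * q / al * tb) with (q * m * tb) by (unfold m; field; lra).
    apply HJa.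
  - exists (dJmodel N0 m Q lam k 0); split.
    + apply dJmodel_gt0; try assumption; rewrite crit_num0; lra.
    + apply filterlim_ext with (dJmodel N0 m Q lam k); [intros; symmetry; apply HDJa |].
      eapply filterlim_filter_le_1; [apply filter_le_within |].
      apply continuous_dJmodel; assumption.
  - exists (N0 / (k * Q)); intros a Ha; rewrite HDJa.
    apply dJmodel_lt0, crit_num_lt0; assumption.
  - intros a _; apply Hcrit.
  - exists astar; split; [assumption | split; [apply Hcrit, Hroot | split; [exact Hroot | split]]].
    + intros a _ Ha; apply Hcrit in Ha.
      apply (crit_num_inj N0 m Q lam k Hm HQ Hlam Hk0); rewrite Ha, Hroot; reflexivity.
    + unfold Ja; rewrite J_Jmodel by lra; apply Jmodel_crit; assumption.
Qed.
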